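(* For every $n\ge1$ and every $\sigma\in S_n(123)$ (permutations of $[n]$ with no increasing subsequence of length $3$), $\mu(\sigma)=L'(\lambda(\sigma))$.
   Context: Dyck path of semilength $n$: lattice path from $(0,0)$ to $(2n,0)$ with steps $U=(1,1)$, $D=(1,-1)$, never below the $x$-axis. A return is a down step ending on the $x$-axis; a Dyck path is irreducible if it has exactly one return; every Dyck path $P$ factors uniquely as $P=P_1\cdots P_r$ with each $P_i$ irreducible (its irreducible components). If $P$ has ascents (maximal runs of $U$) of lengths $a_1,\dots,a_k$ and descents of lengths $d_1,\dots,d_k$ (left to right), with $A_i=a_1+\dots+a_i$, $D_i=d_1+\dots+d_i$, its ascent-descent code is $(A,D)$ with $A=A_1,\dots,A_{k-1}$, $D=D_1,\dots,D_{k-1}$; this determines $P$. $P$ is irreducible iff $A_i>D_i$ for all $i$. The map $L'$: for an irreducible path $P$ of semilength $n$ with code $A=A_1,\dots,A_h$, $D=D_1,\dots,D_h$, let $\{\hat A_1>\dots>\hat A_{n-2-h}\}=\{1,\dots,n-2\}\setminus\{A_1-1,\dots,A_h-1\}$ and $\{\hat D_1>\dots>\hat D_{n-2-h}\}=\{1,\dots,n-2\}\setminus\{D_1,\dots,D_h\}$; $L'(P)$ is the (irreducible) Dyck path of semilength $n$ with code $A'_i=n-\hat A_i$, $D'_i=n-1-\hat D_i$. For a general Dyck path with irreducible components $P_1\cdots P_r$, $L'(P_1\cdots P_r)=L'(P_r)\cdots L'(P_1)$; $L'$ of the empty path is empty. (This is the paper's variant of the Kreweras–Lalanne involution: reflect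 $P$ in a vertical line and replace each irreducible component $UXD$ by $U\,L(X)\,D$, $L$ the Kreweras–Lalanne involution.) For $\sigma=x_1\cdots x_n$: $x_i$ is a left-to-right (LTR) minimum if $x_i<x_j$ for all $j<i$; $x_i$ is a right-to-left (RTL) maximum if $x_i>x_j$ for all $j>i$. $\lambda(\sigma)$: write $\sigma=m_1w_1\cdots m_kw_k$ with $m_1>\dots>m_k$ the LTR minima and $w_i$ possibly empty words, $m_0=n+1$; $\lambda(\sigma)=U^{m_0-m_1}D^{|w_1|+1}\cdots U^{m_{k-1}-m_k}D^{|w_k|+1}$. $\mu(\sigma)$: write $\sigma=u_hM_h\cdots u_1M_1$ with $M_1<\dots<M_h$ the RTL maxima and $u_i$ possibly empty words, $M_0=0$; $\mu(\sigma)=U^{M_1-M_0}D^{|u_1|+1}U^{M_2-M_1}D^{|u_2|+1}\cdots U^{M_h-M_{h-1}}D^{|u_h|+1}$. *)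

(* Dyck paths are encoded as seq bool: true = U, false = D. *)
From mathcomp Require Import all_boot.
Set Implicit Arguments. Unset Strict Implicit. Unset Printing Implicit Defensive.

Definition is_perm_of (n : nat) (s : seq nat) : bool := perm_eq s (iota 1 n).

Definition avoids123 (s : seq nat) : Prop :=
  ~ exists i j k, [/\ i < j, j < k, k < size s &
                  (nth 0 s i < nth 0 s j) && (nth 0 s j < nth 0 s k)].

(* lam_aux c s : c is the current left-to-right minimum (initially m_0 = n+1).
   A new LTR minimum x contributes U^(c-x) D, any other letter contributes D;
   thus the block for m_i is U^(m_(i-1)-m_i) D^(|w_i|+1). *)
Fixpoint lam_aux (c : nat) (s : seq nat) : seq bool :=
  match s with
  | [::] => [::]
  | x :: s' => if x < c then nseq (c - x) true ++ false :: lam_aux x s'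
               else false :: lam_aux c s'
  end.
Definition lambda (s : seq nat) : seq bool := lam_aux (size s).+1 s.

(* mu: read sigma from right to left; c is the current right-to-left maximum
   (initially M_0 = 0).  A new RTL maximum y contributes U^(y-c) D, any other
   letter contributes D; thus the block for M_i is U^(M_i-M_(i-1)) D^(|u_i|+1). *)
Fixpoint mu_aux (c : nat) (s : seq nat) : seq bool :=
  match s with
  | [::] => [::]
  | x :: s' => if c < x then nseq (x - c) true ++ false :: mu_aux x s'
               else false :: mu_aux c s'
  end.
Definition mu (s : seq nat) : seq bool := mu_aux 0 (rev s).

Fixpoint dyck_aux (h : nat) (p : seq bool) : bool :=
  match p with
  | [::] => h == 0
  | b :: p' => if b then dyck_aux h.+1 p' else (0 < h) && dyck_aux h.-1 p'
  end.
Definition is_dyck (p : seq bool) : bool := dyck_aux 0 p.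

Definition semilength (p : seq bool) : nat := count id p.

Fixpoint comps_aux (h : nat) (cur : seq bool) (p : seq bool) : seq (seq bool) :=
  match p with
  | [::] => if cur is [::] then [::] else [:: cur]
  | b :: p' =>
      let h' := if b then h.+1 else h.-1 in
      let cur' := rcons cur b in
      if h' == 0 then cur' :: comps_aux 0 [::] p' else comps_aux h' cur' p'
  end.
Definition components (p : seq bool) : seq (seq bool) := comps_aux 0 [::] p.

Fixpoint runs (p : seq bool) : seq (bool * nat) :=
  match p with
  | [::] => [::]
  | b :: p' =>
      match runs p' with
      | (c, k) :: r => if c == b then (c, k.+1) :: r else (b, 1) :: (c, k) :: r
      | [::] => [:: (b, 1)]
      end
  end.
Definition ascent_lengths (p : seq bool) : seq nat := [seq x.2 | x <- runs p & x.1].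
Definition descent_lengths (p : seq bool) : seq nat := [seq x.2 | x <- runs p & ~~ x.1].

Definition psums (s : seq nat) : seq nat := [seq sumn (take i.+1 s) | i <- iota 0 (size s)].

(* ascent-descent code: A_1..A_(k-1), D_1..D_(k-1) *)
Definition codeA (p : seq bool) : seq nat :=
  let a := ascent_lengths p in take (size a).-1 (psums a).
Definition codeD (p : seq bool) : seq nat :=
  let d := descent_lengths p in take (size d).-1 (psums d).

Definition diffs (s : seq nat) : seq nat := pairmap (fun x y => y - x) 0 s.
Definition path_of_code (n : nat) (A D : seq nat) : seq bool :=
  flatten [seq nseq x.1 true ++ nseq x.2 false
          | x <- zip (diffs (rcons A n)) (diffs (rcons D n))].

Definition Lprime_irr (p : seq bool) : seq bool :=
  let n := semilength p in
  let A := codeA p in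
  let D := codeD p in
  let hatA := rev [seq i <- iota 1 (n - 2) | i \notin [seq a.-1 | a <- A]] in
  let hatD := rev [seq i <- iota 1 (n - 2) | i \notin D] in
  path_of_code n [seq n - a | a <- hatA] [seq n.-1 - d | d <- hatD].

Definition Lprime (p : seq bool) : seq bool :=
  flatten (rev [seq Lprime_irr q | q <- components p]).

From mathcomp Require Import all_boot zify.
Set Implicit Arguments. Unset Strict Implicit. Unset Printing Implicit Defensive.

(* A 123-avoiding permutation is the skew sum of a
   skew-indecomposable block B (its first entries, which carry its largest
   values) and a 123-avoiding remainder R.  lambda turns this skew sum into the
   concatenation lambda(B) lambda(R), whose first factor is an irreducible
   component, while mu turns it into mu(R) mu(B); since L' reverses the order of
   components, induction reduces the claim to a skew-indecomposable B.  There
   the code of lambda(B) is read off the left-to-right minima of B (values and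
   positions), and that of mu(B) = lambda(reverse-complement of B) off its
   right-to-left maxima.  In such a B of length at least 2 every entry is a
   left-to-right minimum or a right-to-left maximum (123-avoidance) but not both
   (indecomposability), so the code of mu(B) is exactly the complement that
   defines L'. *)

Definition block_path (bl : seq (nat * nat)) : seq bool :=
  flatten [seq nseq x.1 true ++ nseq x.2 false | x <- bl].

Definition positive_blocks (bl : seq (nat * nat)) : bool :=
  all (fun x => (0 < x.1) && (0 < x.2)) bl.

Lemma block_path_cons x bl :
  block_path (x :: bl) = nseq x.1 true ++ nseq x.2 false ++ block_path bl.
Proof. by rewrite /block_path /= catA. Qed.

Lemma runs_cons_head c q : exists k r, runs (c :: q) = (c, k) :: r.
Proof.
rewrite /=; case: (runs q) => [|[c' k] r]; first by exists 1, [::].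
case: eqP => [->|_]; first by exists k.+1, r.
by exists 1, ((c', k) :: r).
Qed.

Lemma runs_nseq b k q : head (~~ b) q != b ->
  runs (nseq k.+1 b ++ q) = (b, k.+1) :: runs q.
Proof.
move=> q_b; elim: k => [|k IHk].
  case: q q_b => [|c q] // c_b; have [k [r /= runs_cq]] := runs_cons_head c q.
  by rewrite /= in c_b; rewrite runs_cq (negbTE c_b).
rewrite -[nseq k.+2 b ++ q]/(b :: (nseq k.+1 b ++ q)); move: IHk.
(* [set] keeps [/=] from unfolding [runs] inside [r]. *)
by set r := nseq k.+1 b ++ q => /= ->; rewrite eqxx.
Qed.

Lemma runs_block_path bl : positive_blocks bl ->
  runs (block_path bl) = flatten [seq [:: (true, x.1); (false, x.2)] | x <- bl].
Proof.
elim: bl => [|[[|a] [|d]] bl IHbl] // pos_bl; rewrite block_path_cons.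
have {}pos_bl : positive_blocks bl by [].
rewrite runs_nseq; last by case: d.
rewrite runs_nseq ?IHbl //.
by case: bl pos_bl {IHbl} => [|[[|a'] d'] bl] //= _; rewrite block_path_cons.
Qed.

Lemma ascent_lengths_block_path bl : positive_blocks bl ->
  ascent_lengths (block_path bl) = unzip1 bl.
Proof.
move/runs_block_path; rewrite /ascent_lengths => ->.
by elim: bl => //= x bl ->.
Qed.

Lemma descent_lengths_block_path bl : positive_blocks bl ->
  descent_lengths (block_path bl) = unzip2 bl.
Proof.
move/runs_block_path; rewrite /descent_lengths => ->.
by elim: bl => //= x bl ->.
Qed.

Definition proper_psums (l : seq nat) : seq nat := take (size l).-1 (psums l).

Lemma codeA_block_path bl : positive_blocks bl ->
  codeA (block_path bl) = proper_psums (unzip1 bl).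
Proof. by move=> pos_bl; rewrite /codeA ascent_lengths_block_path. Qed.

Lemma codeD_block_path bl : positive_blocks bl ->
  codeD (block_path bl) = proper_psums (unzip2 bl).
Proof. by move=> pos_bl; rewrite /codeD descent_lengths_block_path. Qed.

Lemma psums_cons a l : psums (a :: l) = a :: map (addn a) (psums l).
Proof.
rewrite /psums /= -[1]/(1 + 0) iotaDl -!map_comp take0 addn0.
by congr (_ :: _); apply: eq_map.
Qed.

Lemma proper_psums_cons a l : l != [::] ->
  proper_psums (a :: l) = a :: map (addn a) (proper_psums l).
Proof.
rewrite /proper_psums psums_cons; case: l => // b l _.
by rewrite [(size _).-1]/= take_cons map_take.
Qed.

Lemma sorted_proper_psums l : all (leq 1) l -> sorted ltn (proper_psums l).
Proof.
suff: all (leq 1) l -> sorted ltn (proper_psums l) && all (leq 1) (proper_psums l).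
  by move=> H /H /andP[].
elim: l => [|a [|b l] IHl] // /andP[a_gt0 pos_l].
rewrite proper_psums_cons // [sorted _ _]/= [all _ (_ :: _)]/= a_gt0.
rewrite path_sortedE; last exact: ltn_trans.
have /andP[srt pos] := IHl pos_l.
rewrite !all_map sorted_map; apply/and3P; split=> //.
- apply/andP; split; first by apply/allP => x /(allP pos) /=; lia.
  by apply: sub_sorted srt => x y /=; lia.
- by apply/allP => x _ /=; lia.
Qed.

Lemma diffs_addn x l : diffs (x :: map (addn x) l) = x :: diffs l.
Proof.
rewrite /diffs /= subn0; congr (_ :: _); rewrite -[x in pairmap _ x]addn0.
elim: l 0 => [|y l IHl] //= a.
by rewrite IHl; congr (_ :: _); lia.
Qed.

Lemma diffs_proper_psums l : l != [::] ->
  diffs (rcons (proper_psums l) (sumn l)) = l.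
Proof.
elim: l => [|a [|b l] IHl] // _; first by rewrite /diffs /= subn0 addn0.
rewrite proper_psums_cons // rcons_cons (_ : sumn _ = a + sumn (b :: l)) //.
by rewrite -map_rcons diffs_addn IHl.
Qed.

Lemma path_of_code_block_path n bl : positive_blocks bl -> bl != [::] ->
  sumn (unzip1 bl) = n -> sumn (unzip2 bl) = n ->
  path_of_code n (codeA (block_path bl)) (codeD (block_path bl)) = block_path bl.
Proof.
have nil_unzip (f : nat * nat -> nat) : bl != [::] -> map f bl != [::] by case: bl.
move=> pos_bl nil_bl sum1 sum2.
rewrite codeA_block_path ?codeD_block_path // /path_of_code -{1}sum1 -{1}sum2.
by rewrite !diffs_proper_psums ?nil_unzip // zip_unzip.
Qed.

Definition ascents_path (us : seq nat) : seq bool :=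
  flatten [seq nseq u true ++ [:: false] | u <- us].

Lemma ascents_path_cons u us :
  ascents_path (u :: us) = nseq u true ++ false :: ascents_path us.
Proof. by rewrite /ascents_path /= -catA. Qed.

Lemma semilength_ascents_path us : semilength (ascents_path us) = sumn us.
Proof.
elim: us => // u us IHus.
by rewrite ascents_path_cons /semilength count_cat count_nseq /= mul1n -IHus.
Qed.

Fixpoint ascents_blocks (u d : nat) (us : seq nat) : seq (nat * nat) :=
  match us with
  | [::] => [:: (u, d)]
  | v :: us' => if 0 < v then (u, d) :: ascents_blocks v 1 us'
                else ascents_blocks u d.+1 us'
  end.

Lemma block_path_ascents_blocks u d us :
  block_path (ascents_blocks u d us) = nseq u true ++ nseq d false ++ ascents_path us.
Proof.
elim: us u d => [|[|v] us IHus] u d /=; first by rewrite /block_path /= !cats0.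
  by rewrite IHus ascents_path_cons -addn1 nseqD -catA.
by rewrite block_path_cons IHus ascents_path_cons.
Qed.

Lemma positive_ascents_blocks u d us :
  0 < u -> 0 < d -> positive_blocks (ascents_blocks u d us).
Proof.
elim: us u d => [|[|v] us IHus] u d u_gt0 d_gt0 /=; first by rewrite u_gt0 d_gt0.
  exact: IHus.
by rewrite u_gt0 d_gt0 IHus.
Qed.

Lemma ascents_blocks_neq0 u d us : ascents_blocks u d us != [::].
Proof. by elim: us u d => [|[|v] us IHus] u d //=; apply: IHus. Qed.

Lemma unzip1_ascents_blocks u d us :
  unzip1 (ascents_blocks u d us) = u :: [seq v <- us | 0 < v].
Proof. by elim: us u d => [|[|v] us IHus] u d //=; rewrite IHus. Qed.

Lemma sumn_unzip1_ascents_blocks u d us :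
  sumn (unzip1 (ascents_blocks u d us)) = u + sumn us.
Proof. elim: us u d => [|[|v] us IHus] u d /=; rewrite ?IHus; lia. Qed.

Lemma sumn_unzip2_ascents_blocks u d us :
  sumn (unzip2 (ascents_blocks u d us)) = d + size us.
Proof. elim: us u d => [|[|v] us IHus] u d /=; rewrite ?IHus; lia. Qed.

Lemma proper_psums_unzip2_ascents_blocks u d us :
  proper_psums (unzip2 (ascents_blocks u d us)) =
  [seq i <- iota d (size us) | 0 < nth 0 us (i - d)].
Proof.
elim: us u d => [|[|v] us IHus] u d //=; rewrite subnn /=.
  rewrite IHus; apply: eq_in_filter => i; rewrite mem_iota; case/andP=> d_lt_i _.
  by rewrite (_ : i - d = (i - d.+1).+1) //; lia.
have neq0 : unzip2 (ascents_blocks v.+1 1 us) != [::].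
  by case: (ascents_blocks _ _ _) (ascents_blocks_neq0 v.+1 1 us).
rewrite proper_psums_cons // IHus -(addn1 d) (iotaDl d 1) filter_map.
congr (_ :: map _ _).
apply: eq_in_filter => i; rewrite mem_iota /= addKn.
by case: i => //= i; rewrite subn1.
Qed.

Lemma mem_proper_psums_filter_pos l x :
  (x \in proper_psums [seq v <- l | 0 < v]) <->
  exists j, [/\ 0 < nth 0 l j, has (leq 1) (drop j.+1 l) & x = sumn (take j.+1 l)].
Proof.
elim: l x => [|a l IHl] x; first by split=> [|[j []]] //; rewrite nth_nil.
have [->|a_gt0] := posnP a.
  rewrite [filter _ _]/= IHl; split=> [[j [? ? ->]]|[[|j] [//= ? ? ->]]].
    by exists j.+1.
  by exists j.
rewrite [filter _ _]/= a_gt0.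
have [l_pos0|l_pos] := eqVneq [seq v <- l | 0 < v] [::].
  rewrite l_pos0; split=> [//|[[|j] [/= nth_gt0 has_l _]]].
    by move: has_l; rewrite drop0 has_filter l_pos0.
  have j_lt : j < size l by rewrite ltnNge; apply: contraTN nth_gt0 => /(nth_default 0) ->.
  have : nth 0 l j \in [seq v <- l | 0 < v] by rewrite mem_filter nth_gt0 mem_nth.
  by rewrite l_pos0.
rewrite proper_psums_cons // inE; split.
  case/orP=> [/eqP ->|/mapP[y /IHl[j [? ? ->]] ->]]; last by exists j.+1.
  by exists 0; rewrite /= drop0 take0 addn0 has_filter.
case=> [[|j] [/= ? ? ->]]; first by rewrite take0 addn0 eqxx.
apply/orP; right; apply/mapP; exists (sumn (take j.+1 l)) => //.
by apply/IHl; exists j.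
Qed.

Lemma ascents_path_blocks u us :
  ascents_path (u :: us) = block_path (ascents_blocks u 1 us).
Proof. by rewrite block_path_ascents_blocks ascents_path_cons. Qed.

Lemma codeA_ascents_path l : 0 < head 0 l ->
  codeA (ascents_path l) = proper_psums [seq v <- l | 0 < v].
Proof.
case: l => // u us u_gt0; rewrite ascents_path_blocks.
by rewrite codeA_block_path ?positive_ascents_blocks // unzip1_ascents_blocks /= u_gt0.
Qed.

Lemma codeD_ascents_path l : 0 < head 0 l ->
  codeD (ascents_path l) = [seq i <- iota 1 (size l).-1 | 0 < nth 0 l i].
Proof.
case: l => // u us u_gt0; rewrite ascents_path_blocks.
rewrite codeD_block_path ?positive_ascents_blocks // proper_psums_unzip2_ascents_blocks.
by apply: eq_in_filter => i; rewrite mem_iota; case: i => //= i _; rewrite subn1.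
Qed.

Lemma path_of_code_ascents_path n l : 0 < head 0 l -> sumn l = n -> size l = n ->
  path_of_code n (codeA (ascents_path l)) (codeD (ascents_path l)) = ascents_path l.
Proof.
case: l => // u us u_gt0 sum_n size_n; rewrite ascents_path_blocks.
apply: path_of_code_block_path; rewrite ?positive_ascents_blocks ?ascents_blocks_neq0 //.
  by rewrite sumn_unzip1_ascents_blocks.
by rewrite sumn_unzip2_ascents_blocks add1n.
Qed.

Definition ltr_min (s : seq nat) (i : nat) : bool :=
  all (fun k => nth 0 s i < nth 0 s k) (iota 0 i).

Definition rtl_max (s : seq nat) (i : nat) : bool :=
  all (fun k => nth 0 s k < nth 0 s i) (iota i.+1 (size s - i.+1)).

Lemma ltr_minP s i : reflect (forall k, k < i -> nth 0 s i < nth 0 s k) (ltr_min s i).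
Proof. by apply: (iffP allP) => H k; have := H k; rewrite mem_iota. Qed.

Lemma rtl_maxP s i :
  reflect (forall k, i < k < size s -> nth 0 s k < nth 0 s i) (rtl_max s i).
Proof. by apply: (iffP allP) => H k; have := H k; rewrite mem_iota; lia. Qed.

Lemma ltr_min_cons x s k : ltr_min (x :: s) k.+1 = (nth 0 s k < x) && ltr_min s k.
Proof. by rewrite /ltr_min [iota 0 k.+1]/= (iotaDl 1 0) /= all_map. Qed.

(* The ascent lengths of [lam_aux c s]: each letter contributes [U^(c - x) D],
   where [c] is the current left-to-right minimum (truncated subtraction gives
   [0] when [x] is not a new minimum). *)
Fixpoint lambda_ascents (c : nat) (s : seq nat) : seq nat :=
  if s is x :: s' then (c - x) :: lambda_ascents (minn c x) s' else [::].

Lemma lam_aux_ascents_path c s : lam_aux c s = ascents_path (lambda_ascents c s).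
Proof.
elim: s c => //= x s IHs c; rewrite ascents_path_cons -IHs.
by case: (ltnP x c) => // c_le_x; rewrite (eqP c_le_x).
Qed.

Lemma size_lambda_ascents c s : size (lambda_ascents c s) = size s.
Proof. by elim: s c => //= x s IHs c; rewrite IHs. Qed.

Lemma lambda_ascents_gt0 c s i : i < size s ->
  (0 < nth 0 (lambda_ascents c s) i) = (nth 0 s i < c) && ltr_min s i.
Proof.
elim: s c i => [|x s IHs] c [|i] //= i_lt; first by rewrite subn_gt0 andbT.
by rewrite IHs // ltr_min_cons leq_min andbA.
Qed.

Lemma sumn_take_lambda_ascents_gt0 c s i : 0 < nth 0 (lambda_ascents c s) i ->
  sumn (take i.+1 (lambda_ascents c s)) = c - nth 0 s i.
Proof.
elim: s c i => [|x s IHs] c [|i] //=; first by rewrite take0 addn0.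
move=> pos_i; rewrite IHs //.
have i_lt : i < size s.
  rewrite ltnNge -(size_lambda_ascents (minn c x)).
  by apply: contraTN pos_i => /(nth_default 0) ->.
move: pos_i; rewrite lambda_ascents_gt0 // => /andP[]; lia.
Qed.

Lemma foldl_minn_le c s : foldl minn c s <= c.
Proof. by elim: s c => //= x s IHs c; apply: leq_trans (IHs _) (geq_minl _ _). Qed.

Lemma foldl_minn_le_mem c s y : y \in s -> foldl minn c s <= y.
Proof.
elim: s c => //= x s IHs c; rewrite inE => /predU1P[->|y_in]; last exact: IHs.
exact: leq_trans (foldl_minn_le _ _) (geq_minr _ _).
Qed.

Lemma foldl_minn_ge c s m : {in s, forall y, m <= y} -> m <= c -> m <= foldl minn c s.
Proof.
elim: s c => //= x s IHs c m_le m_le_c; apply: IHs => [y y_in|].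
  by apply: m_le; rewrite inE y_in orbT.
by rewrite leq_min m_le_c m_le ?mem_head.
Qed.

Lemma foldl_maxn_ge c s : c <= foldl maxn c s.
Proof. by elim: s c => //= x s IHs c; apply: leq_trans (leq_maxl _ _) (IHs _). Qed.

Lemma foldl_maxn_ge_mem c s y : y \in s -> y <= foldl maxn c s.
Proof.
elim: s c => //= x s IHs c; rewrite inE => /predU1P[->|y_in]; last exact: IHs.
exact: leq_trans (leq_maxr _ _) (foldl_maxn_ge _ _).
Qed.

Lemma foldl_maxn_le c s m : {in s, forall y, y <= m} -> c <= m -> foldl maxn c s <= m.
Proof.
elim: s c => //= x s IHs c le_m c_le_m; apply: IHs => [y y_in|].
  by apply: le_m; rewrite inE y_in orbT.
by rewrite geq_max c_le_m le_m ?mem_head.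
Qed.

Lemma sumn_take_lambda_ascents c s k :
  sumn (take k (lambda_ascents c s)) = c - foldl minn c (take k s).
Proof.
elim: s c k => [|x s IHs] c [|k] /=; rewrite ?subnn //.
by rewrite IHs; have := foldl_minn_le (minn c x) (take k s); lia.
Qed.

Lemma sumn_lambda_ascents c s : sumn (lambda_ascents c s) = c - foldl minn c s.
Proof.
by rewrite -[s in RHS]take_size -sumn_take_lambda_ascents -(size_lambda_ascents c) take_size.
Qed.

Lemma mu_aux_lam_aux c N s : c <= N -> all (leq^~ N) s ->
  mu_aux c s = lam_aux (N - c) (map (fun x => N - x) s).
Proof.
elim: s c => //= x s IHs c c_le /andP[x_le s_le].
case: ifP => c_lt_x; case: ifP => lt; try lia.
  by rewrite IHs //; congr (nseq _ _ ++ _); lia.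
by rewrite IHs.
Qed.

Lemma lam_aux_addn t c s : lam_aux (t + c) (map (addn t) s) = lam_aux c s.
Proof. by elim: s c => //= x s IHs c; rewrite ltn_add2l subnDl; case: ifP; rewrite IHs. Qed.

Lemma mu_aux_addn t c s : mu_aux (t + c) (map (addn t) s) = mu_aux c s.
Proof. by elim: s c => //= x s IHs c; rewrite ltn_add2l subnDl; case: ifP; rewrite IHs. Qed.

Lemma foldl_minn_addn t c s : foldl minn (t + c) (map (addn t) s) = t + foldl minn c s.
Proof. by elim: s c => //= x s IHs c; rewrite -addn_minr IHs. Qed.

Lemma lam_aux_cat c s1 s2 :
  lam_aux c (s1 ++ s2) = lam_aux c s1 ++ lam_aux (foldl minn c s1) s2.
Proof.
elim: s1 c => //= x s1 IHs c; case: ifP => x_lt_c; rewrite IHs /= -?catA.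
  by have -> : minn c x = x by lia.
by have -> : minn c x = c by lia.
Qed.

Lemma mu_aux_cat c s1 s2 :
  mu_aux c (s1 ++ s2) = mu_aux c s1 ++ mu_aux (foldl maxn c s1) s2.
Proof.
elim: s1 c => //= x s1 IHs c; case: ifP => c_lt_x; rewrite IHs /= -?catA.
  by have -> : maxn c x = x by lia.
by have -> : maxn c x = c by lia.
Qed.

Fixpoint first_return (h : nat) (p : seq bool) : bool :=
  if p is b :: p' then
    let h' := if b then h.+1 else h.-1 in
    if h' == 0 then p' == [::] else first_return h' p'
  else false.

Lemma first_return_nseq h u q : first_return h (nseq u true ++ q) = first_return (h + u) q.
Proof. by elim: u h => [|u IHu] h /=; rewrite ?addn0 // IHu addnS. Qed.

Lemma first_return_ascents_path h us : us != [::] ->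
  (forall k, 0 < k < size us -> k < h + sumn (take k us)) ->
  h + sumn us = size us -> first_return h (ascents_path us).
Proof.
elim: us h => // u us IHus h _ above sum_size.
rewrite ascents_path_cons first_return_nseq /=.
case: us IHus above sum_size => [|v us] IHus above sum_size.
  by move: sum_size => /=; case: eqP => //; lia.
have := above 1 isT; rewrite /= => ?; case: eqP; first lia.
move=> _; apply: IHus => // [k /andP[k_gt0 k_lt]|]; last by move: sum_size => /=; lia.
by have := above k.+1; rewrite /= ltnS => /(_ k_lt); lia.
Qed.

Lemma comps_aux_first_return h cur p q : first_return h p ->
  comps_aux h cur (p ++ q) = (cur ++ p) :: comps_aux 0 [::] q.
Proof.
elim: p h cur => //= b p IHp h cur; case: ifP => [_ /eqP ->|_ ret].
  by rewrite cats1.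
by rewrite IHp // cat_rcons.
Qed.

Lemma Lprime_cat p q : first_return 0 p -> Lprime (p ++ q) = Lprime q ++ Lprime_irr p.
Proof.
by move=> ret; rewrite /Lprime /components comps_aux_first_return //= rev_cons flatten_rcons.
Qed.

Lemma has_drop_nthP (T : Type) (a : pred T) x0 s j :
  reflect (exists2 k, j <= k < size s & a (nth x0 s k)) (has a (drop j s)).
Proof.
apply: (iffP (has_nthP x0)) => [[i] | [k k_in a_k]].
  by rewrite size_drop nth_drop => i_lt a_i; exists (j + i) => //; lia.
by exists (k - j); rewrite ?size_drop ?nth_drop ?subnKC //; lia.
Qed.

Section PermutationOfIota.

Variables (n : nat) (s : seq nat).
Hypothesis s_perm : perm_eq s (iota 1 n).

Lemma size_perm_iota : size s = n.
Proof. by rewrite (perm_size s_perm) size_iota. Qed.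

Lemma uniq_perm_iota : uniq s.
Proof. by rewrite (perm_uniq s_perm) iota_uniq. Qed.

Lemma mem_perm_iota x : (x \in s) = (0 < x <= n).
Proof. by rewrite (perm_mem s_perm) mem_iota; lia. Qed.

Lemma nth_perm_iota i : i < n -> 0 < nth 0 s i <= n.
Proof. by move=> i_lt; rewrite -mem_perm_iota mem_nth // size_perm_iota. Qed.

Lemma nth_perm_iota_inj i j : i < n -> j < n -> nth 0 s i = nth 0 s j -> i = j.
Proof.
by move=> i_lt j_lt /eqP; rewrite nth_uniq ?size_perm_iota ?uniq_perm_iota // => /eqP.
Qed.

Lemma index_perm_iota v : 0 < v <= n -> index v s < n /\ nth 0 s (index v s) = v.
Proof.
move=> v_in; have v_s : v \in s by rewrite mem_perm_iota.
by rewrite -size_perm_iota index_mem; split=> //; apply: nth_index.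
Qed.

Lemma foldl_minn_perm_iota : 0 < n -> foldl minn n.+1 s = 1.
Proof.
move=> n_gt0; apply/eqP; rewrite eqn_leq foldl_minn_ge ?andbT //.
  by apply: foldl_minn_le_mem; rewrite mem_perm_iota; lia.
by move=> y; rewrite mem_perm_iota; lia.
Qed.

Lemma foldl_maxn_perm_iota : foldl maxn 0 s = n.
Proof.
apply/eqP; rewrite eqn_leq foldl_maxn_le //=; last by move=> y; rewrite mem_perm_iota; lia.
have [-> //|n_gt0] := posnP n.
by apply: foldl_maxn_ge_mem; rewrite mem_perm_iota n_gt0 leqnn.
Qed.

Lemma ltr_min_nth_eq1 i : i < n -> nth 0 s i = 1 -> ltr_min s i.
Proof.
move=> i_lt s_i; apply/ltr_minP => k k_lt; have k_lt_n := ltn_trans k_lt i_lt.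
have : nth 0 s k != nth 0 s i.
  by apply: contraTneq k_lt => /(nth_perm_iota_inj k_lt_n i_lt) ->; rewrite ltnn.
by have := nth_perm_iota k_lt_n; rewrite s_i; lia.
Qed.

Lemma lambda_perm_iota : lambda s = ascents_path (lambda_ascents n.+1 s).
Proof. by rewrite /lambda size_perm_iota lam_aux_ascents_path. Qed.

Lemma lambda_ascents_perm_iota_gt0 i :
  (0 < nth 0 (lambda_ascents n.+1 s) i) = (i < n) && ltr_min s i.
Proof.
have [i_lt|n_le] := ltnP i n; last by rewrite nth_default // size_lambda_ascents size_perm_iota.
by rewrite lambda_ascents_gt0 ?size_perm_iota //; have := nth_perm_iota i_lt; case: leqP; lia.
Qed.

Lemma head_lambda_ascents_perm_iota : 0 < n -> 0 < head 0 (lambda_ascents n.+1 s).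
Proof. by move=> n_gt0; rewrite -nth0 lambda_ascents_perm_iota_gt0 n_gt0. Qed.

Lemma mem_codeA_lambda x : 0 < n -> x \in codeA (lambda s) <->
  exists j, [/\ j < n, ltr_min s j, nth 0 s j != 1 & x = n.+1 - nth 0 s j].
Proof.
move=> n_gt0; rewrite lambda_perm_iota codeA_ascents_path ?head_lambda_ascents_perm_iota //.
rewrite mem_proper_psums_filter_pos.
split=> [[j [pos_j /(has_drop_nthP _ 0)[k /andP[j_lt_k _] pos_k] ->]]|[j [j_lt ltr_j s_j ->]]].
  move: (pos_j); rewrite lambda_ascents_perm_iota_gt0 => /andP[j_lt ltr_j].
  rewrite lambda_ascents_perm_iota_gt0 in pos_k.
  have /andP[k_lt /ltr_minP /(_ j j_lt_k) s_kj] := pos_k.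
  exists j; split=> //; last by rewrite sumn_take_lambda_ascents_gt0.
  by have := nth_perm_iota k_lt; lia.
have [one_lt one_s] : index 1 s < n /\ nth 0 s (index 1 s) = 1.
  by apply: index_perm_iota; rewrite n_gt0.
have pos_j : 0 < nth 0 (lambda_ascents n.+1 s) j by rewrite lambda_ascents_perm_iota_gt0 j_lt.
exists j; split=> //; last by rewrite sumn_take_lambda_ascents_gt0.
apply/(has_drop_nthP _ 0); exists (index 1 s); last first.
  by rewrite lambda_ascents_perm_iota_gt0 one_lt ltr_min_nth_eq1.
rewrite size_lambda_ascents size_perm_iota one_lt andbT ltnNge.
apply: contra s_j; rewrite leq_eqVlt => /orP[/eqP <-|]; first by rewrite one_s.
move=> /(ltr_minP _ _ ltr_j); rewrite one_s ltnS leqn0 => /eqP s_j0.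
by have := nth_perm_iota j_lt; lia.
Qed.

Lemma mem_codeD_lambda x : 0 < n ->
  (x \in codeD (lambda s)) = (0 < x < n) && ltr_min s x.
Proof.
move=> n_gt0; rewrite lambda_perm_iota codeD_ascents_path ?head_lambda_ascents_perm_iota //.
rewrite mem_filter mem_iota size_lambda_ascents size_perm_iota lambda_ascents_perm_iota_gt0.
by case: (ltr_min s x); rewrite ?andbT ?andbF //; apply/idP/idP; lia.
Qed.

Lemma sorted_codeA_lambda : 0 < n -> sorted ltn (codeA (lambda s)).
Proof.
move=> n_gt0; rewrite lambda_perm_iota codeA_ascents_path ?head_lambda_ascents_perm_iota //.
by apply: sorted_proper_psums; apply: filter_all.
Qed.

Lemma sorted_codeD_lambda : 0 < n -> sorted ltn (codeD (lambda s)).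
Proof.
move=> n_gt0; rewrite lambda_perm_iota codeD_ascents_path ?head_lambda_ascents_perm_iota //.
exact/sorted_filter/iota_ltn_sorted/ltn_trans.
Qed.

Lemma semilength_lambda : 0 < n -> semilength (lambda s) = n.
Proof.
move=> n_gt0; rewrite lambda_perm_iota semilength_ascents_path sumn_lambda_ascents.
by rewrite foldl_minn_perm_iota ?subn1.
Qed.

Lemma path_of_code_lambda : 0 < n ->
  path_of_code n (codeA (lambda s)) (codeD (lambda s)) = lambda s.
Proof.
move=> n_gt0; rewrite lambda_perm_iota path_of_code_ascents_path ?head_lambda_ascents_perm_iota //.
  by rewrite sumn_lambda_ascents foldl_minn_perm_iota ?subn1.
by rewrite size_lambda_ascents size_perm_iota.
Qed.

End PermutationOfIota.

Definition complement_rev (n : nat) (s : seq nat) : seq nat := [seq n.+1 - x | x <- rev s].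

Definition skew_indecomposable (n : nat) (s : seq nat) : Prop :=
  forall k, 0 < k < n -> ~~ all (fun x => n - k < x) (take k s).

Lemma mem_map_subn_filter_iota m k (P : pred nat) x : k <= m ->
  (x \in [seq m - a | a <- rev [seq i <- iota 1 k | P i]]) = [&& x < m, m - x <= k & P (m - x)].
Proof.
move=> k_le_m; rewrite map_rev mem_rev; apply/mapP/and3P => [[a]|[x_lt le_k P_mx]].
  by rewrite mem_filter mem_iota => /andP[P_a a_in] ->; rewrite subKn; [split=> //|]; lia.
by exists (m - x); [rewrite mem_filter mem_iota P_mx|]; lia.
Qed.

Lemma sorted_map_subn_filter_iota m k (P : pred nat) : k <= m ->
  sorted ltn [seq m - a | a <- rev [seq i <- iota 1 k | P i]].
Proof.
move=> k_le_m; rewrite sorted_map rev_sorted.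
apply: (@sub_in_sorted _ [pred x | x <= m]); last first.
  exact/sorted_filter/iota_ltn_sorted/ltn_trans.
  by apply/allP => x; rewrite mem_filter mem_iota /=; lia.
by move=> x y; rewrite !inE /=; lia.
Qed.

Section ComplementReverse.

Variables (n : nat) (s : seq nat).
Hypothesis s_perm : perm_eq s (iota 1 n).

Local Notation t := (complement_rev n s).

Lemma perm_iota_complement_rev : perm_eq t (iota 1 n).
Proof.
apply: uniq_perm; rewrite ?iota_uniq //.
  rewrite map_inj_in_uniq ?rev_uniq ?(uniq_perm_iota s_perm) // => a b.
  by rewrite !mem_rev !(mem_perm_iota s_perm); lia.
move=> y; rewrite mem_iota; apply/mapP/idP => [[x]|y_in].
  by rewrite mem_rev (mem_perm_iota s_perm); lia.
by exists (n.+1 - y); [rewrite mem_rev (mem_perm_iota s_perm)|]; lia.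
Qed.

Lemma nth_complement_rev i : i < n -> nth 0 t i = n.+1 - nth 0 s (n - i.+1).
Proof.
move=> i_lt; rewrite (nth_map 0); last by rewrite size_rev (size_perm_iota s_perm).
by rewrite nth_rev (size_perm_iota s_perm).
Qed.

Lemma ltr_min_complement_rev i : i < n -> ltr_min t i = rtl_max s (n - i.+1).
Proof.
move=> i_lt; apply/ltr_minP/rtl_maxP; rewrite (size_perm_iota s_perm) => max_i k k_in.
  have := max_i (n - k.+1); rewrite !nth_complement_rev; try lia.
  rewrite (_ : n - (n - k.+1).+1 = k); last lia.
  have := nth_perm_iota s_perm (_ : k < n).
  by have := nth_perm_iota s_perm (_ : n - i.+1 < n); lia.
have := max_i (n - k.+1); rewrite !nth_complement_rev; try lia.
have := nth_perm_iota s_perm (_ : n - k.+1 < n).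
by have := nth_perm_iota s_perm (_ : n - i.+1 < n); lia.
Qed.

Lemma mu_complement_rev : mu s = lambda t.
Proof.
rewrite /mu /lambda size_map size_rev (size_perm_iota s_perm) (mu_aux_lam_aux (N := n.+1)) //.
by apply/allP => x; rewrite mem_rev (mem_perm_iota s_perm); lia.
Qed.

End ComplementReverse.

Section MuCodes.

Variables (n : nat) (s : seq nat).
Hypothesis s_perm : perm_eq s (iota 1 n).
Hypothesis n_gt0 : 0 < n.

Lemma mem_codeA_mu x : x \in codeA (mu s) <->
  exists i, [/\ i < n, rtl_max s i, nth 0 s i != n & x = nth 0 s i].
Proof.
have t_perm := perm_iota_complement_rev s_perm.
rewrite (mu_complement_rev s_perm) (mem_codeA_lambda t_perm _ n_gt0).
split=> [[j [j_lt ltr_j t_j ->]]|[i [i_lt max_i s_i ->]]].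
  rewrite ltr_min_complement_rev // in ltr_j; rewrite nth_complement_rev // in t_j *.
  have := nth_perm_iota s_perm (_ : n - j.+1 < n).
  by exists (n - j.+1); split=> //; lia.
have j_lt : n - i.+1 < n by lia.
have nj : n - (n - i.+1).+1 = i by lia.
exists (n - i.+1); rewrite ltr_min_complement_rev // nth_complement_rev // nj.
by have := nth_perm_iota s_perm i_lt; split=> //; lia.
Qed.

Lemma mem_codeD_mu x : (x \in codeD (mu s)) = (0 < x < n) && rtl_max s (n - x.+1).
Proof.
have t_perm := perm_iota_complement_rev s_perm.
rewrite (mu_complement_rev s_perm) (mem_codeD_lambda t_perm _ n_gt0).
by case: (ltnP x n) => x_lt; rewrite ?andbF ?andbT // ltr_min_complement_rev.
Qed.

Hypotheses (s_avoids : avoids123 s) (s_indec : skew_indecomposable n s).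

Lemma ltr_min_or_rtl_max i : i < n -> ltr_min s i || rtl_max s i.
Proof.
move=> i_lt; apply/norP => -[/allPn[k]]; rewrite mem_iota add0n => /andP[_ k_lt] /=.
move=> s_ik /allPn[l]; rewrite mem_iota (size_perm_iota s_perm) => /andP[i_l l_lt] /= s_il.
have {}l_lt : l < n by lia.
apply: s_avoids; exists k, i, l; split=> //; first by rewrite (size_perm_iota s_perm).
have neq a b : a < n -> b < n -> a != b -> nth 0 s a != nth 0 s b.
  by move=> a_lt b_lt; apply: contra => /eqP /(nth_perm_iota_inj s_perm a_lt b_lt) ->.
have := neq k i (ltn_trans k_lt i_lt) i_lt; have := neq i l i_lt l_lt; lia.
Qed.

Lemma not_ltr_min_rtl_max i : 1 < n -> i < n -> ~~ (ltr_min s i && rtl_max s i).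
Proof.
move=> n_gt1 i_lt; apply/negP => /andP[/ltr_minP min_i /rtl_maxP max_i].
set v := nth 0 s i.
(* The entries after [i] are distinct and smaller than [v], so [n - i <= v];
   those before [i] exceed [v], hence a proper prefix holds the top values. *)
have v_ge : n - i <= v.
  have sub : {subset drop i.+1 s <= iota 1 v.-1}.
    move=> y /(nthP 0)[m]; rewrite size_drop nth_drop (size_perm_iota s_perm) => m_lt <-.
    have im_lt : i.+1 + m < n by lia.
    have := max_i (i.+1 + m); rewrite (size_perm_iota s_perm) im_lt ltnS leq_addr => /(_ isT).
    have := nth_perm_iota s_perm im_lt; rewrite -/v mem_iota add1n.
    by set a := nth 0 s _ => ? ?; rewrite prednK; lia.
  have := uniq_leq_size (drop_uniq i.+1 (uniq_perm_iota s_perm)) sub.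
  by rewrite size_drop size_iota (size_perm_iota s_perm); have := nth_perm_iota s_perm i_lt; lia.
set k := if i == 0 then 1 else i.
have k_in : 0 < k < n by rewrite /k; case: eqP; lia.
apply: (negP (s_indec k_in)); apply/(all_nthP 0) => m.
rewrite size_take (size_perm_iota s_perm) (proj2 (andP k_in)) => m_lt; rewrite nth_take //.
move: m_lt; rewrite /k; case: eqP => [i0 m_lt | _ /min_i]; last lia.
by rewrite (_ : m = i) -/v; lia.
Qed.

Lemma codeA_mu : 1 < n -> codeA (mu s) =
  [seq n - a | a <- rev [seq i <- iota 1 (n - 2) | i \notin [seq a.-1 | a <- codeA (lambda s)]]].
Proof.
move=> n_gt1; apply: (irr_sorted_eq ltn_trans ltnn).
- rewrite (mu_complement_rev s_perm).
  exact: sorted_codeA_lambda (perm_iota_complement_rev s_perm) n_gt0.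
- by apply: sorted_map_subn_filter_iota; lia.
move=> x; rewrite mem_map_subn_filter_iota; last lia.
have codeA_pred a : (a \in [seq a.-1 | a <- codeA (lambda s)]) ->
    exists j, [/\ j < n, ltr_min s j, nth 0 s j != 1 & a = n - nth 0 s j].
  case/mapP=> b /(mem_codeA_lambda s_perm _ n_gt0)[j [j_lt ltr_j s_j b_eq]] a_eq.
  exists j; split=> //; rewrite a_eq b_eq subSn //.
  by case/andP: (nth_perm_iota s_perm j_lt).
apply/idP/idP => [/mem_codeA_mu[i [i_lt max_i s_i ->]]|/and3P[x_lt x_ge x_notin]].
  have := nth_perm_iota s_perm i_lt; have := not_ltr_min_rtl_max n_gt1 i_lt.
  rewrite max_i andbT => not_min s_i_in.
  have s_i1 : nth 0 s i != 1 by exact: contraNneq (ltr_min_nth_eq1 s_perm i_lt) not_min.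
  apply/and3P; split; [lia | lia |]; apply/negP => /codeA_pred[j [j_lt ltr_j _ eq_ij]].
  have s_j_in := nth_perm_iota s_perm j_lt.
  have ij : i = j by apply: (nth_perm_iota_inj s_perm i_lt j_lt); lia.
  by rewrite ij ltr_j in not_min.
have [i_lt s_i] : index x s < n /\ nth 0 s (index x s) = x.
  by apply: index_perm_iota; lia.
apply/mem_codeA_mu; exists (index x s); rewrite s_i; split=> //; last lia.
have := ltr_min_or_rtl_max i_lt; case min_i: ltr_min => //= _.
move/negP: x_notin; case; apply/mapP; exists (n.+1 - x); last by rewrite subSn // ltnW.
by apply/(mem_codeA_lambda s_perm _ n_gt0); exists (index x s); rewrite s_i; split=> //; lia.
Qed.

Lemma codeD_mu : 1 < n -> codeD (mu s) =
  [seq n.-1 - d | d <- rev [seq i <- iota 1 (n - 2) | i \notin codeD (lambda s)]].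
Proof.
move=> n_gt1; apply: (irr_sorted_eq ltn_trans ltnn).
- rewrite (mu_complement_rev s_perm).
  exact: sorted_codeD_lambda (perm_iota_complement_rev s_perm) n_gt0.
- by apply: sorted_map_subn_filter_iota; lia.
move=> x; rewrite mem_codeD_mu mem_map_subn_filter_iota -?subn1; last lia.
rewrite (mem_codeD_lambda s_perm _ n_gt0) -subnDA add1n.
have d_lt : n - x.+1 < n by lia.
apply/idP/idP => [/andP[/andP[x_gt0 x_lt] max_x]|/and3P[x_lt x_ge]].
  have := not_ltr_min_rtl_max n_gt1 d_lt; rewrite max_x andbT => not_min.
  apply/and3P; split; [|lia|by rewrite negb_and not_min orbT].
  rewrite ltnNge; apply: contra not_min => x_ge.
  by rewrite (_ : n - x.+1 = 0) //; lia.
rewrite negb_and (_ : 0 < n - x.+1 < n); last lia.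
move=> /= not_min; have := ltr_min_or_rtl_max d_lt.
by rewrite (negbTE not_min) /= => ->; rewrite andbT; lia.
Qed.

Lemma mu_skew_indecomposable : mu s = Lprime_irr (lambda s).
Proof.
have [n_gt1|n_le1] := ltnP 1 n; last first.
  have n1 : n = 1 by lia.
  by move: s_perm; rewrite n1 => /perm_small_eq ->.
rewrite /Lprime_irr (semilength_lambda s_perm n_gt0) -codeA_mu // -codeD_mu //.
by rewrite (mu_complement_rev s_perm) (path_of_code_lambda (perm_iota_complement_rev s_perm)).
Qed.

End MuCodes.

Lemma first_return_lambda n s : perm_eq s (iota 1 n) -> 0 < n ->
  skew_indecomposable n s -> first_return 0 (lambda s).
Proof.
move=> s_perm n_gt0 s_indec; rewrite (lambda_perm_iota s_perm).
have size_la : size (lambda_ascents n.+1 s) = n.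
  by rewrite size_lambda_ascents (size_perm_iota s_perm).
apply: first_return_ascents_path; rewrite ?size_la.
- by rewrite -size_eq0 size_la -lt0n.
- move=> k k_in; rewrite add0n sumn_take_lambda_ascents.
  have /allPn[y y_in /=] := s_indec k k_in.
  by have := foldl_minn_le_mem n.+1 y_in; lia.
- by rewrite add0n sumn_lambda_ascents (foldl_minn_perm_iota s_perm) // subn1.
Qed.

Lemma avoids123_catl s1 s2 : avoids123 (s1 ++ s2) -> avoids123 s1.
Proof.
move=> avoids [i [j [k [ij jk k_lt ineq]]]]; apply: avoids; exists i, j, k.
rewrite size_cat !nth_cat (ltn_trans ij (ltn_trans jk k_lt)) (ltn_trans jk k_lt) k_lt.
by split=> //; lia.
Qed.

Lemma avoids123_catr s1 s2 : avoids123 (s1 ++ s2) -> avoids123 s2.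
Proof.
move=> avoids [i [j [k [ij jk k_lt ineq]]]]; apply: avoids.
exists (size s1 + i), (size s1 + j), (size s1 + k).
by rewrite size_cat !nth_cat !ltnNge !leq_addr /= !addKn; split=> //; lia.
Qed.

Lemma avoids123_map_addn t s : avoids123 (map (addn t) s) -> avoids123 s.
Proof.
move=> avoids [i [j [k [ij jk k_lt ineq]]]]; apply: avoids; exists i, j, k.
have j_lt := ltn_trans jk k_lt; have i_lt := ltn_trans ij j_lt.
by rewrite size_map !(nth_map 0) //; split=> //; lia.
Qed.

Section SkewSum.

Variables (b t : nat) (B R : seq nat).
Hypotheses (B_perm : perm_eq B (iota 1 b)) (R_perm : perm_eq R (iota 1 t)).

Lemma lambda_skew_sum : 0 < b -> lambda (map (addn t) B ++ R) = lambda B ++ lambda R.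
Proof.
move=> b_gt0; rewrite /lambda lam_aux_cat size_cat size_map.
rewrite (size_perm_iota B_perm) (size_perm_iota R_perm) (addnC b t) -addnS.
by rewrite lam_aux_addn foldl_minn_addn (foldl_minn_perm_iota B_perm) // addn1.
Qed.

Lemma mu_skew_sum : mu (map (addn t) B ++ R) = mu R ++ mu B.
Proof.
have rR_perm : perm_eq (rev R) (iota 1 t) by rewrite perm_rev.
rewrite /mu rev_cat mu_aux_cat (foldl_maxn_perm_iota rR_perm) -map_rev.
by rewrite -{1}(addn0 t) mu_aux_addn.
Qed.

End SkewSum.

Lemma perm_iota_take_top n s b : perm_eq s (iota 1 n) -> b <= n ->
  all (fun x => n - b < x) (take b s) ->
  perm_eq (take b s) (iota (n - b).+1 b) /\ perm_eq (drop b s) (iota 1 (n - b)).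
Proof.
move=> s_perm b_le top_b.
have take_perm : perm_eq (take b s) (iota (n - b).+1 b).
  have sub : {subset take b s <= iota (n - b).+1 b}.
    move=> x x_in; have /= x_gt := allP top_b x x_in.
    by have := mem_take x_in; rewrite (mem_perm_iota s_perm) mem_iota; lia.
  have uniq_take := take_uniq b (uniq_perm_iota s_perm).
  have size_take_b : size (take b s) = b by rewrite size_takel ?(size_perm_iota s_perm).
  have size_le : size (iota (n - b).+1 b) <= size (take b s) by rewrite size_iota size_take_b.
  have [_ eq_take] := uniq_min_size uniq_take sub size_le.
  by apply: uniq_perm; rewrite ?iota_uniq.
split=> //; rewrite -(perm_cat2r (take b s)) (perm_catC (drop b s)) cat_take_drop.
rewrite (permPl s_perm) (permPr (_ : perm_eq _ (iota 1 (n - b) ++ iota (n - b).+1 b))).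
  by rewrite -add1n -iotaD subnK.
by rewrite perm_cat2l.
Qed.

Lemma skew_decomposition (n : nat) (s : seq nat) : perm_eq s (iota 1 n) -> 0 < n ->
  exists b B R, [/\ 0 < b <= n, s = map (addn (n - b)) B ++ R, perm_eq B (iota 1 b),
                    perm_eq R (iota 1 (n - b)) & skew_indecomposable b B].
Proof.
move=> s_perm n_gt0.
pose top k := (0 < k) && all (fun x => n - k < x) (take k s).
have top_n : top n.
  rewrite /top n_gt0 take_oversize ?(size_perm_iota s_perm) // subnn.
  by apply/allP => x; rewrite (mem_perm_iota s_perm); lia.
have [b /andP[b_gt0 top_b] min_b] := ex_minnP (ex_intro top n top_n).
have b_le : b <= n by apply: min_b.
have [take_perm drop_perm] := perm_iota_take_top s_perm b_le top_b.
have take_gt x : x \in take b s -> n - b < x by move/(allP top_b).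
exists b, (map (subn^~ (n - b)) (take b s)), (drop b s); split=> //; first by rewrite b_gt0.
- rewrite -map_comp map_id_in ?cat_take_drop // => x /take_gt /=; lia.
- have -> : iota 1 b = map (subn^~ (n - b)) (iota (n - b).+1 b).
    by rewrite -(addn1 (n - b)) (iotaDl (n - b) 1) -map_comp map_id_in // => x _ /=; lia.
  exact: perm_map.
move=> k /andP[k_gt0 k_lt]; apply/negP => top_k.
suff : b <= k by lia.
apply: min_b; rewrite /top k_gt0; apply/allP => x x_in.
have x_gt : n - b < x.
  by apply/take_gt/(@mem_take k); rewrite (take_takel _ (ltnW k_lt)).
move: top_k; rewrite -map_take (take_takel _ (ltnW k_lt)) => /allP /(_ (x - (n - b))).
by move/(_ (map_f (subn^~ (n - b)) x_in)) => /=; lia.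
Qed.

Lemma mu_Lprime_lambda (n : nat) (s : seq nat) : perm_eq s (iota 1 n) -> avoids123 s ->
  mu s = Lprime (lambda s).
Proof.
elim/ltn_ind: n s => n IHn s s_perm s_avoids.
have [n0|n_gt0] := posnP n.
  by move: s_perm; rewrite n0 => /perm_nilP ->.
have [b [B [R [/andP[b_gt0 b_le] s_def B_perm R_perm B_indec]]]] :=
  skew_decomposition s_perm n_gt0.
subst s.
have B_avoids : avoids123 B := avoids123_map_addn (avoids123_catl s_avoids).
rewrite (mu_skew_sum _ R_perm) (lambda_skew_sum B_perm) //.
rewrite (Lprime_cat _ (first_return_lambda B_perm b_gt0 B_indec)).
rewrite -(IHn (n - b) _ R R_perm (avoids123_catr s_avoids)); last lia.
by rewrite (mu_skew_indecomposable B_perm b_gt0 B_avoids B_indec).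
Qed.

Theorem theorem6 (n : nat) (sigma : seq nat) :
  1 <= n -> is_perm_of n sigma -> avoids123 sigma ->
  mu sigma = Lprime (lambda sigma).
Proof. by move=> _; apply: mu_Lprime_lambda. Qed.
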